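(* Let $j\ge 3$ be an integer and let $\bar\alpha_j$ be the largest $\alpha\ge 0$ such that $\left(1-e^{-\alpha jx}\right)^{j-2}\left(1+(j-2)e^{-\alpha jx}\right)\le x$ for all $x\in(0,1]$. For $\alpha>0$ and an integer $k>\alpha j$, let $\delta=\alpha j/k$, $\lambda(z)=z^{j-1}$, $\rho(z)=z^{k-1}$, and define $x_0=\delta$ and $$x_{i+1}=\delta\Bigl(\lambda\bigl(1-\rho(1-x_i)\bigr)+\lambda'\bigl(1-\rho(1-x_i)\bigr)\bigl(\rho(1-x_i)-\rho\bigl(1-(1-\delta)\lambda(1-\rho(1-x_i))-x_i\bigr)\bigr)\Bigr),$$ where $\lambda'(z)=(j-1)z^{j-2}$. (a) If $\alpha<\bar\alpha_j$, there exists $K_1<\infty$ such that for all $k\ge K_1$, $x_i\to 0$ as $i\to\infty$. (b) If $\alpha>\bar\alpha_j$, there exists $K_2<\infty$ such that for all $k\ge K_2$, $x_i$ does not converge to $0$.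
   Context: The recursion is the message-based density evolution of the LM2 verification-decoding algorithm (LM2-MB) for a $(j,k)$-regular LDPC code on the $q$-ary symmetric channel with error probability $\delta$ (equivalently, reconstruction of a strictly sparse signal with fraction $\delta$ of nonzero entries); $x_i$ is the fraction of unverified messages, and $x_i\to 0$ corresponds to successful decoding with high probability as the block length tends to infinity. *)

From Stdlib Require Import Reals.
Open Scope R_scope.

Definition thr_lhs (j : nat) (a x : R) : R :=
  (1 - exp (- a * INR j * x)) ^ (j - 2) * (1 + (INR j - 2) * exp (- a * INR j * x)).

Definition thr_set (j : nat) (a : R) : Prop :=
  0 <= a /\ forall x : R, 0 < x <= 1 -> thr_lhs j a x <= x.

Definition is_alpha_bar (j : nat) (abar : R) : Prop :=
  thr_set j abar /\ forall a : R, thr_set j a -> a <= abar.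

Definition lam (j : nat) (z : R) : R := z ^ (j - 1).
Definition dlam (j : nat) (z : R) : R := INR (j - 1) * z ^ (j - 2).
Definition rho (k : nat) (z : R) : R := z ^ (k - 1).

Definition lm2_step (j k : nat) (delta x : R) : R :=
  let y := 1 - rho k (1 - x) in
  delta * (lam j y + dlam j y * (rho k (1 - x) - rho k (1 - (1 - delta) * lam j y - x))).

Definition delta_of (j k : nat) (a : R) : R := a * INR j / INR k.

Fixpoint lm2_seq (j k : nat) (a : R) (i : nat) : R :=
  match i with
  | O => delta_of j k a
  | S i' => lm2_step j k (delta_of j k a) (lm2_seq j k a i')
  end.

(* Write j = n + 2, k = m + 1, d = a j / k and r = (1 - x)^m.  One step of the
   recursion equals d thr_poly n r minus a nonnegative correction, where
   thr_poly n r = (1 - r)^n (1 + n r) is the threshold function of the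
   statement evaluated at r = e^{-a j x}; thr_poly n is nonincreasing on [0,1].

   (a) a < abar.  Since (1 - x)^m >= e^{-m x/(1-x)}, the defining inequality of
       abar gives step(x) <= d m x / ((1 - d) abar j) on [0, d]; for large k the
       factor is < 1, so the orbit decreases geometrically to 0.
   (b) a > abar.  Pick a' in (abar, a) and p in (0,1] violating the threshold
       inequality at a'.  For large k, (1 - x)^m <= e^{-a' j p} on [d p, d] and
       the correction is smaller than the violation margin, so [d p, d] is
       invariant and the orbit stays away from 0. *)

From Stdlib Require Import Reals Lra Lia Classical.
Open Scope R_scope.

Definition thr_poly (n : nat) (r : R) : R := (1 - r) ^ n * (1 + INR n * r).

Lemma exp_le (u v : R) : u <= v -> exp u <= exp v.
Proof. intros [H | ->]; [now left; apply exp_increasing | lra]. Qed.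

Lemma pow_le_one (y : R) (n : nat) : 0 <= y <= 1 -> y ^ n <= 1.
Proof. intros Hy; rewrite <- (pow1 n); apply pow_incr; lra. Qed.

Lemma exp_pow_INR (z : R) (m : nat) : exp z ^ m = exp (INR m * z).
Proof. now rewrite <- Rpower_pow by apply exp_pos; unfold Rpower; rewrite ln_exp. Qed.

(* Two-sided exponential bounds on (1 - x)^m, from 1 + t <= e^t:
   e^{-m x/(1-x)} <= (1 - x)^m <= e^{-m x}. *)
Lemma pow_one_minus_bounds (m : nat) (x : R) : 0 <= x < 1 ->
  exp (- (INR m * (x / (1 - x)))) <= (1 - x) ^ m <= exp (- (INR m * x)).
Proof.
  intros Hx.
  replace (- (INR m * (x / (1 - x)))) with (INR m * - (x / (1 - x))) by ring.
  replace (- (INR m * x)) with (INR m * - x) by ring.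
  rewrite <- !exp_pow_INR; split; apply pow_incr; split.
  - left; apply exp_pos.
  - rewrite exp_Ropp.
    replace (1 - x) with (/ (1 + x / (1 - x))) at 2 by (field; lra).
    apply Rinv_le_contravar; [|apply exp_ineq1_le].
    assert (0 <= x / (1 - x)) by (apply Rmult_le_pos; [lra | left; apply Rinv_0_lt_compat; lra]); lra.
  - lra.
  - pose proof (exp_ineq1_le (- x)); lra.
Qed.

Lemma iterate_invariant (P : R -> Prop) (f : R -> R) (u : nat -> R) :
  (forall x, P x -> P (f x)) -> P (u O) -> (forall i, u (S i) = f (u i)) ->
  forall i, P (u i).
Proof. intros Hf H0 Hu i; induction i as [|i IH]; [exact H0 | rewrite Hu; auto]. Qed.

Lemma contraction_cv0 (f : R -> R) (u : nat -> R) (c d : R) :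
  0 <= c < 1 -> (forall x, 0 <= x <= d -> 0 <= f x <= c * x) ->
  0 <= u O <= d -> (forall i, u (S i) = f (u i)) -> Un_cv u 0.
Proof.
  intros Hc Hf H0 Hu.
  assert (Hgeo : forall i, 0 <= u i <= c ^ i * d).
  { induction i as [|i IH]; [simpl; lra |].
    assert (0 <= c ^ i <= 1) by (split; [apply pow_le | apply pow_le_one]; lra).
    rewrite Hu; specialize (Hf (u i) ltac:(nra)); simpl; nra. }
  intros eps Heps.
  destruct (Req_dec d 0) as [Hd0 | Hd0].
  { exists O; intros i _; unfold R_dist; specialize (Hgeo i).
    rewrite Hd0, Rmult_0_r in Hgeo; rewrite Rminus_0_r, Rabs_right; lra. }
  assert (Hd : 0 < d) by (destruct (Hgeo O); lra).
  destruct (pow_lt_1_zero c ltac:(rewrite Rabs_right; lra) (eps / d)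
              ltac:(apply Rdiv_lt_0_compat; lra)) as [N HN].
  exists N; intros i Hi; unfold R_dist; rewrite Rminus_0_r.
  specialize (HN i Hi); specialize (Hgeo i).
  assert (0 <= c ^ i) by (apply pow_le; lra).
  rewrite Rabs_right in HN |- * by lra.
  apply Rmult_lt_compat_r with (r := d) in HN; [|lra].
  replace (eps / d * d) with eps in HN by (field; lra); lra.
Qed.

Lemma bounded_below_not_cv0 (u : nat -> R) (lo : R) :
  0 < lo -> (forall i, lo <= u i) -> ~ Un_cv u 0.
Proof.
  intros Hlo Hu Hcv; destruct (Hcv lo Hlo) as [N HN].
  specialize (HN N (Nat.le_refl N)); specialize (Hu N).
  unfold R_dist in HN; rewrite Rminus_0_r, Rabs_right in HN; lra.
Qed.

Lemma eventually_INR_gt (C : R) : exists N, forall m, (N <= m)%nat -> C < INR m.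
Proof.
  destruct (INR_archimed 1 C ltac:(lra)) as [N HN]; exists N; intros m Hm.
  apply le_INR in Hm; lra.
Qed.

Lemma eventually_pow_lt (q eps : R) : 0 <= q < 1 -> 0 < eps ->
  exists N, forall m, (N <= m)%nat -> q ^ m < eps.
Proof.
  intros Hq Heps; destruct (pow_lt_1_zero q ltac:(rewrite Rabs_right; lra) eps Heps) as [N HN].
  exists N; intros m Hm; specialize (HN m Hm).
  rewrite Rabs_right in HN; [lra | apply Rle_ge, pow_le; lra].
Qed.

Definition thr_poly_flip (n : nat) (y : R) : R :=
  (INR n + 1) * y ^ n - INR n * y ^ S n.

Lemma thr_poly_flipE (n : nat) (r : R) : thr_poly n r = thr_poly_flip n (1 - r).
Proof. unfold thr_poly, thr_poly_flip; simpl; ring. Qed.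

(* Its derivative (n+1) n y^(n-1) (1 - y) is nonnegative on [0,1], so it is
   nondecreasing there (mean value theorem). *)
Lemma thr_poly_flip_incr (n : nat) (y1 y2 : R) :
  0 <= y1 -> y1 <= y2 -> y2 <= 1 -> thr_poly_flip n y1 <= thr_poly_flip n y2.
Proof.
  intros H1 H12 H2.
  destruct (Req_dec y1 y2) as [<- | Hne]; [lra |].
  set (D c := (INR n + 1) * (INR n * c ^ Nat.pred n) - INR n * (INR (S n) * c ^ Nat.pred (S n))).
  assert (Hder : forall c, derivable_pt_lim (thr_poly_flip n) c (D c)).
  { intros c.
    change (thr_poly_flip n) with (minus_fct (mult_real_fct (INR n + 1) (fun y => y ^ n))
                                            (mult_real_fct (INR n) (fun y => y ^ S n))).
    apply derivable_pt_lim_minus; apply derivable_pt_lim_scal; apply derivable_pt_lim_pow. }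
  destruct (MVT_cor2 _ D y1 y2 ltac:(lra) (fun c _ => Hder c)) as [c [Hmvt Hc_in]].
  assert (HD : 0 <= D c).
  { unfold D; rewrite S_INR; simpl Nat.pred.
    destruct n as [|n]; [simpl; lra |].
    replace ((INR (S n) + 1) * (INR (S n) * c ^ Nat.pred (S n)) - INR (S n) * ((INR (S n) + 1) * c ^ S n))
      with ((INR (S n) + 1) * INR (S n) * (c ^ n * (1 - c))) by (simpl; ring).
    assert (0 <= c ^ n) by (apply pow_le; lra).
    pose proof (pos_INR (S n)).
    apply Rmult_le_pos; [apply Rmult_le_pos |]; nra. }
  nra.
Qed.

Lemma thr_poly_decr (n : nat) (r1 r2 : R) :
  0 <= r1 -> r1 <= r2 -> r2 <= 1 -> thr_poly n r2 <= thr_poly n r1.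
Proof. intros; rewrite !thr_poly_flipE; apply thr_poly_flip_incr; lra. Qed.

Lemma thr_poly_le_one (n : nat) (r : R) : 0 <= r <= 1 -> thr_poly n r <= 1.
Proof.
  intros Hr; replace 1 with (thr_poly n 0) by (unfold thr_poly; rewrite Rminus_0_r, pow1; ring).
  apply thr_poly_decr; lra.
Qed.

Lemma thr_lhsE (n : nat) (a x : R) :
  thr_lhs (S (S n)) a x = thr_poly n (exp (- a * INR (S (S n)) * x)).
Proof.
  unfold thr_lhs, thr_poly; replace (S (S n) - 2)%nat with n by lia.
  now replace (INR (S (S n)) - 2) with (INR n) by (rewrite !S_INR; ring).
Qed.

Lemma lm2_stepE (n m : nat) (d x : R) :
  lm2_step (S (S n)) (S m) d x =
  d * (thr_poly n ((1 - x) ^ m)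
       - INR (S n) * (1 - (1 - x) ^ m) ^ n
         * (1 - (1 - d) * (1 - (1 - x) ^ m) ^ S n - x) ^ m).
Proof.
  unfold lm2_step, lam, dlam, rho, thr_poly.
  replace (S (S n) - 1)%nat with (S n) by lia.
  replace (S (S n) - 2)%nat with n by lia.
  replace (S m - 1)%nat with m by lia.
  cbv zeta; rewrite S_INR; simpl; ring.
Qed.

Lemma lm2_step_upper (n m : nat) (d x : R) : 0 <= x <= d -> d <= 1 ->
  0 <= lm2_step (S (S n)) (S m) d x <= d * thr_poly n ((1 - x) ^ m).
Proof.
  intros Hx Hd. rewrite lm2_stepE.
  set (r := (1 - x) ^ m); set (y := 1 - r); set (b := 1 - (1 - d) * y ^ S n - x).
  assert (Hr : 0 <= r <= 1) by (split; [apply pow_le | apply pow_le_one]; lra).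
  assert (Hyn : 0 <= y ^ n) by (apply pow_le; unfold y; lra).
  assert (Hy1 : 0 <= y ^ S n <= 1) by (split; [apply pow_le | apply pow_le_one]; unfold y; lra).
  assert (Hbm : 0 <= b ^ m <= r)
    by (split; [apply pow_le | apply pow_incr]; unfold b; nra).
  assert (HSn : 0 <= INR (S n)) by apply pos_INR.
  replace (thr_poly n r) with (y ^ n * (y + INR (S n) * r))
    by (unfold thr_poly, y; rewrite S_INR; ring).
  split; apply Rmult_le_pos || apply Rmult_le_compat_l; try lra.
  - replace (y ^ n * (y + INR (S n) * r) - INR (S n) * y ^ n * b ^ m)
      with (y ^ n * (y + INR (S n) * (r - b ^ m))) by ring.
    apply Rmult_le_pos; [lra | unfold y; nra].
  - assert (0 <= INR (S n) * y ^ n * b ^ m) by (apply Rmult_le_pos; [apply Rmult_le_pos|]; lra).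
    lra.
Qed.

Lemma lm2_step_lower (n m : nat) (d x : R) : 0 <= x <= d -> d <= 1 / 2 ->
  d * (thr_poly n ((1 - x) ^ m) - INR (S n) * (1 - (1 - (1 - x) ^ m) ^ S n / 2) ^ m)
  <= lm2_step (S (S n)) (S m) d x.
Proof.
  intros Hx Hd. rewrite lm2_stepE.
  set (r := (1 - x) ^ m); set (y := 1 - r); set (b := 1 - (1 - d) * y ^ S n - x).
  assert (Hr : 0 <= r <= 1) by (split; [apply pow_le | apply pow_le_one]; lra).
  assert (Hyn : 0 <= y ^ n <= 1) by (split; [apply pow_le | apply pow_le_one]; unfold y; lra).
  assert (Hy1 : 0 <= y ^ S n <= 1) by (split; [apply pow_le | apply pow_le_one]; unfold y; lra).
  assert (Hbm : 0 <= b ^ m <= (1 - y ^ S n / 2) ^ m)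
    by (split; [apply pow_le | apply pow_incr]; unfold b; nra).
  assert (HSn : 0 <= INR (S n)) by apply pos_INR.
  apply Rmult_le_compat_l; [lra |].
  assert (INR (S n) * y ^ n * b ^ m <= INR (S n) * (1 - y ^ S n / 2) ^ m); [|lra].
  rewrite Rmult_assoc; apply Rmult_le_compat_l; [lra | nra].
Qed.

(* Membership of abar in the threshold set, read as
   abar j thr_poly n (e^{-s}) <= s for every s >= 0 (for s > abar j the bound
   thr_poly <= 1 suffices). *)
Lemma alpha_bar_bound (n : nat) (ab s : R) : (1 <= n)%nat ->
  thr_set (S (S n)) ab -> 0 < ab -> 0 <= s ->
  ab * INR (S (S n)) * thr_poly n (exp (- s)) <= s.
Proof.
  intros Hn [_ Hthr] Hab Hs.
  set (J := INR (S (S n))).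
  assert (HJ : 0 < J) by (apply lt_0_INR; lia).
  destruct (Rle_lt_dec s (ab * J)) as [Hsmall | Hbig].
  - destruct (Req_dec s 0) as [-> | Hs0].
    + rewrite Ropp_0, exp_0; unfold thr_poly.
      destruct n as [|n]; [lia | simpl; lra].
    + assert (Hx : 0 < s / (ab * J) <= 1).
      { split; [apply Rdiv_lt_0_compat; nra |].
        apply Rmult_le_reg_r with (ab * J); [nra |]; field_simplify; nra. }
      specialize (Hthr _ Hx); rewrite thr_lhsE in Hthr; fold J in Hthr.
      replace (- ab * J * (s / (ab * J))) with (- s) in Hthr by (field; lra).
      apply Rmult_le_compat_l with (r := ab * J) in Hthr; [|nra].
      replace (ab * J * (s / (ab * J))) with s in Hthr by (field; lra); lra.
  - pose proof (thr_poly_le_one n (exp (- s))) as H1.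
    assert (exp (- s) <= 1) by (rewrite <- exp_0; apply exp_le; lra).
    pose proof (exp_pos (- s)).
    assert (thr_poly n (exp (- s)) <= 1) by (apply H1; lra).
    assert (0 < ab * J) by nra; nra.
Qed.

(* Below the threshold one step is a linear contraction on [0, d]: using
   (1 - x)^m >= e^{-s} with s = m x / (1 - x) and the previous bound. *)
Lemma lm2_step_contracts (n m : nat) (ab d x : R) : (1 <= n)%nat ->
  thr_set (S (S n)) ab -> 0 < ab -> 0 <= x <= d -> d < 1 ->
  lm2_step (S (S n)) (S m) d x <= d * INR m / ((1 - d) * ab * INR (S (S n))) * x.
Proof.
  intros Hn Hthr Hab Hx Hd.
  set (J := INR (S (S n))); set (s := INR m * (x / (1 - x))).
  assert (HJ : 0 < J) by (apply lt_0_INR; lia).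
  assert (HabJ : 0 < ab * J) by nra.
  assert (Hm : 0 <= INR m) by apply pos_INR.
  assert (Hs : 0 <= s) by (apply Rmult_le_pos; [lra | apply Rmult_le_pos; [lra | left; apply Rinv_0_lt_compat; lra]]).
  destruct (lm2_step_upper n m d x Hx ltac:(lra)) as [_ Hup].
  destruct (pow_one_minus_bounds m x ltac:(lra)) as [Hlow _].
  pose proof (thr_poly_decr n _ _ (Rlt_le _ _ (exp_pos (- s))) Hlow
                ltac:(apply pow_le_one; lra)) as Hdec.
  pose proof (alpha_bar_bound n ab s Hn Hthr Hab Hs) as Hbound; fold J in Hbound.
  assert (Hsd : s * (1 - d) <= INR m * x).
  { replace (INR m * x) with (s * (1 - x)) by (unfold s; field; lra); nra. }
  apply Rle_trans with (d * thr_poly n ((1 - x) ^ m)); [exact Hup |].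
  apply Rle_trans with (d * (s / (ab * J))).
  - apply Rmult_le_compat_l; [lra |].
    apply Rmult_le_reg_l with (ab * J); [lra |].
    replace (ab * J * (s / (ab * J))) with s by (field; lra).
    apply Rle_trans with (ab * J * thr_poly n (exp (- s))); [apply Rmult_le_compat_l|]; lra.
  - replace (d * INR m / ((1 - d) * ab * J) * x) with (d * (INR m * x / ((1 - d) * ab * J)))
      by (field; repeat split; lra).
    apply Rmult_le_compat_l; [lra |].
    unfold Rdiv; apply Rmult_le_reg_r with ((1 - d) * ab * J); [nra |].
    field_simplify; [lra | repeat split; lra | repeat split; lra].
Qed.

(* Part (a) for a fixed k = m + 1 that is large enough that
   d = a j / k < 1 - a/abar: the contraction factor
   d m / ((1 - d) abar j) is then < 1. *)
Lemma lm2_seq_cv0 (n m : nat) (ab a : R) : (1 <= n)%nat ->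
  thr_set (S (S n)) ab -> 0 < a < ab ->
  a * INR (S (S n)) * ab < (ab - a) * INR (S m) ->
  Un_cv (lm2_seq (S (S n)) (S m) a) 0.
Proof.
  intros Hn Hthr Ha Hk.
  set (J := INR (S (S n))) in *; set (K := INR (S m)) in *.
  set (d := delta_of (S (S n)) (S m) a).
  assert (HJ : 0 < J) by (apply lt_0_INR; lia).
  assert (HK : 0 < K) by (apply lt_0_INR; lia).
  assert (HmK : INR m < K) by (unfold K; rewrite S_INR; lra).
  assert (Hm : 0 <= INR m) by apply pos_INR.
  assert (HdK : d * K = a * J) by (unfold d, delta_of; fold J K; field; lra).
  assert (Hd : 0 < d) by nra.
  assert (Hdab : d * ab < ab - a) by nra.
  set (c := d * INR m / ((1 - d) * ab * J)).
  assert (Hc : 0 <= c < 1).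
  { assert (0 < (1 - d) * ab * J) by (apply Rmult_lt_0_compat; nra).
    unfold c; split; [apply Rmult_le_pos; [nra | left; apply Rinv_0_lt_compat; lra] |].
    apply Rmult_lt_reg_r with ((1 - d) * ab * J); [lra |].
    field_simplify; [nra | nra]. }
  apply (contraction_cv0 (lm2_step (S (S n)) (S m) d) _ c d Hc).
  - intros x Hx; split.
    + apply (lm2_step_upper n m d x Hx); nra.
    + apply lm2_step_contracts; auto; nra.
  - simpl; fold d; lra.
  - reflexivity.
Qed.

Lemma theorem4_a (n : nat) (abar a : R) : (1 <= n)%nat ->
  thr_set (S (S n)) abar -> 0 < a -> a < abar ->
  exists K1 : nat, forall k : nat, (K1 <= k)%nat -> Un_cv (lm2_seq (S (S n)) k a) 0.
Proof.
  intros Hn Hthr Ha Hab.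
  destruct (eventually_INR_gt (a * INR (S (S n)) * abar / (abar - a))) as [N HN].
  exists (S N); intros [|m] Hm; [lia |].
  apply (lm2_seq_cv0 n m abar a Hn Hthr ltac:(lra)).
  specialize (HN (S m) ltac:(lia)).
  apply Rmult_lt_compat_r with (r := abar - a) in HN; [|lra].
  replace (a * INR (S (S n)) * abar / (abar - a) * (abar - a))
    with (a * INR (S (S n)) * abar) in HN by (field; lra); lra.
Qed.

Lemma alpha_bar_violation (j : nat) (abar a : R) :
  is_alpha_bar j abar -> abar < a ->
  exists p, 0 < p <= 1 /\ p < thr_lhs j a p.
Proof.
  intros [[Hab0 _] Hmax] Ha; apply NNPP; intros Hnone.
  assert (Hset : thr_set j a).
  { split; [lra |]; intros x Hx; apply Rnot_lt_le; intros Hlt; eauto. }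
  specialize (Hmax a Hset); lra.
Qed.

Lemma lm2_step_stays_away (n m : nat) (a' p d x : R) :
  0 <= a' -> 0 < p <= 1 -> 0 < d <= 1 / 2 -> a' * INR (S (S n)) <= d * INR m ->
  INR (S n) * (1 - (1 - exp (- a' * INR (S (S n)) * p)) ^ S n / 2) ^ m
    < thr_lhs (S (S n)) a' p - p ->
  d * p <= x <= d ->
  d * p <= lm2_step (S (S n)) (S m) d x <= d.
Proof.
  intros Ha' Hp Hd Hdm Hmargin Hx.
  set (e0 := exp (- a' * INR (S (S n)) * p)) in *.
  set (r := (1 - x) ^ m).
  assert (Hx0 : 0 <= x) by nra.
  assert (He0 : e0 <= 1).
  { assert (0 <= a' * INR (S (S n)) * p) by (pose proof (pos_INR (S (S n))); apply Rmult_le_pos; nra).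
    rewrite <- exp_0; apply exp_le; lra. }
  assert (Hr : 0 <= r <= 1) by (split; [apply pow_le | apply pow_le_one]; lra).
  assert (Hre : r <= e0).
  { apply Rle_trans with (exp (- (INR m * x))); [apply pow_one_minus_bounds; lra |].
    apply exp_le; pose proof (pos_INR m); nra. }
  assert (HT : thr_lhs (S (S n)) a' p <= thr_poly n r)
    by (rewrite thr_lhsE; fold e0; apply thr_poly_decr; lra).
  assert (Hq : (1 - (1 - r) ^ S n / 2) ^ m <= (1 - (1 - e0) ^ S n / 2) ^ m).
  { assert ((1 - e0) ^ S n <= (1 - r) ^ S n) by (apply pow_incr; lra).
    assert ((1 - r) ^ S n <= 1) by (apply pow_le_one; lra).
    apply pow_incr; lra. }
  pose proof (lm2_step_lower n m d x ltac:(lra) ltac:(lra)) as Hlow.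
  destruct (lm2_step_upper n m d x ltac:(lra) ltac:(lra)) as [_ Hup].
  fold r in Hlow, Hup; split.
  - assert (Hinner : p <= thr_poly n r - INR (S n) * (1 - (1 - r) ^ S n / 2) ^ m).
    { pose proof (pos_INR (S n)).
      assert (INR (S n) * (1 - (1 - r) ^ S n / 2) ^ m <= INR (S n) * (1 - (1 - e0) ^ S n / 2) ^ m)
        by (apply Rmult_le_compat_l; lra).
      lra. }
    apply Rle_trans with (2 := Hlow); apply Rmult_le_compat_l; lra.
  - pose proof (thr_poly_le_one n r Hr); nra.
Qed.

Lemma lm2_seq_not_cv0 (n m : nat) (a a' p : R) :
  0 <= a' -> 0 < a -> 0 < p <= 1 ->
  2 * a * INR (S (S n)) <= INR (S m) -> a' * INR (S m) <= a * INR m ->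
  INR (S n) * (1 - (1 - exp (- a' * INR (S (S n)) * p)) ^ S n / 2) ^ m
    < thr_lhs (S (S n)) a' p - p ->
  ~ Un_cv (lm2_seq (S (S n)) (S m) a) 0.
Proof.
  intros Ha' Ha Hp Hk Hm Hmargin.
  set (J := INR (S (S n))) in *; set (K := INR (S m)) in *.
  set (d := delta_of (S (S n)) (S m) a).
  assert (HJ : 0 < J) by (apply lt_0_INR; lia).
  assert (HK : 0 < K) by (apply lt_0_INR; lia).
  assert (HdK : d * K = a * J) by (unfold d, delta_of; fold J K; field; lra).
  assert (Hd : 0 < d <= 1 / 2) by (split; nra).
  assert (Hdm : a' * J <= d * INR m).
  { apply Rmult_le_reg_r with K; [lra |].
    replace (d * INR m * K) with (a * J * INR m) by (rewrite <- HdK; ring); nra. }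
  apply (bounded_below_not_cv0 _ (d * p)); [nra |].
  intros i; apply (iterate_invariant (fun x => d * p <= x <= d)
                     (lm2_step (S (S n)) (S m) d)).
  - intros x Hx; apply (lm2_step_stays_away n m a' p); assumption.
  - simpl; fold d; nra.
  - reflexivity.
Qed.

Lemma eventually_margin (n : nat) (a' p eps : R) : 0 < a' -> 0 < p -> 0 < eps ->
  exists N, forall m, (N <= m)%nat ->
    INR (S n) * (1 - (1 - exp (- a' * INR (S (S n)) * p)) ^ S n / 2) ^ m < eps.
Proof.
  intros Ha' Hp Heps.
  set (e0 := exp (- a' * INR (S (S n)) * p)).
  assert (He0 : 0 < e0 < 1).
  { split; [apply exp_pos |].
    assert (0 < a' * INR (S (S n)) * p)
      by (apply Rmult_lt_0_compat; [apply Rmult_lt_0_compat; [lra | apply lt_0_INR; lia] | lra]).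
    rewrite <- exp_0; apply exp_increasing; lra. }
  assert (Hy : 0 < (1 - e0) ^ S n <= 1) by (split; [apply pow_lt | apply pow_le_one]; lra).
  assert (HSn : 0 < INR (S n)) by (apply lt_0_INR; lia).
  destruct (eventually_pow_lt (1 - (1 - e0) ^ S n / 2) (eps / INR (S n)) ltac:(lra)
              ltac:(apply Rdiv_lt_0_compat; lra)) as [N HN].
  exists N; intros m Hm; specialize (HN m Hm).
  apply Rmult_lt_compat_l with (r := INR (S n)) in HN; [|lra].
  replace (INR (S n) * (eps / INR (S n))) with eps in HN by (field; lra); exact HN.
Qed.

(* Part (b): take a' = (a + abar)/2 and a violating point p for a'; all large
   k satisfy the hypotheses of lm2_seq_not_cv0. *)
Lemma theorem4_b (n : nat) (abar a : R) :
  is_alpha_bar (S (S n)) abar -> abar < a ->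
  exists K2 : nat, forall k : nat, (K2 <= k)%nat -> ~ Un_cv (lm2_seq (S (S n)) k a) 0.
Proof.
  intros Hbar Ha.
  assert (Hab0 : 0 <= abar) by (destruct Hbar as [[] _]; lra).
  set (a' := (a + abar) / 2).
  assert (Ha' : abar < a' < a) by (unfold a'; lra).
  destruct (alpha_bar_violation _ abar a' Hbar ltac:(lra)) as [p [Hp Hviol]].
  destruct (eventually_margin n a' p (thr_lhs (S (S n)) a' p - p) ltac:(lra) ltac:(lra)
              ltac:(lra)) as [N1 HN1].
  destruct (eventually_INR_gt (2 * a * INR (S (S n)))) as [N2 HN2].
  destruct (eventually_INR_gt (a' / (a - a'))) as [N3 HN3].
  exists (S (N1 + N2 + N3)); intros [|m] Hm; [lia |].
  specialize (HN2 m ltac:(lia)); specialize (HN3 m ltac:(lia)).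
  apply (lm2_seq_not_cv0 n m a a' p); try lra; [rewrite (S_INR m); lra | |].
  - apply Rmult_lt_compat_r with (r := a - a') in HN3; [|lra].
    replace (a' / (a - a') * (a - a')) with a' in HN3 by (field; lra).
    rewrite (S_INR m); lra.
  - apply HN1; lia.
Qed.

(* The theorem for j = n + 2. *)
Theorem theorem4 (j : nat) (hj : (3 <= j)%nat) (abar : R)
  (habar : is_alpha_bar j abar) :
  (forall a : R, 0 < a -> a < abar ->
     exists K1 : nat, forall k : nat, (K1 <= k)%nat -> a * INR j < INR k ->
       Un_cv (lm2_seq j k a) 0) /\
  (forall a : R, abar < a ->
     exists K2 : nat, forall k : nat, (K2 <= k)%nat -> a * INR j < INR k ->
       ~ Un_cv (lm2_seq j k a) 0).
Proof.
  destruct j as [|[|n]]; [lia | lia |].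
  split.
  - intros a Ha Hab.
    destruct (theorem4_a n abar a ltac:(lia) (proj1 habar) Ha Hab) as [K1 HK1].
    exists K1; intros k Hk _; exact (HK1 k Hk).
  - intros a Hab.
    destruct (theorem4_b n abar a habar Hab) as [K2 HK2].
    exists K2; intros k Hk _; exact (HK2 k Hk).
Qed.
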